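(* Let $G$ be a Polish group, $X$ a Polish space with a continuous $G$-action, $F\subseteq E^X_G$ a Borel equivalence relation on $X$, and $C\subseteq X$ a set such that for every $x\in C$ there is an open neighbourhood $V\subseteq G$ of $1_G$ with $V\cdot x\cap C\subseteq[x]_F$, and such that $G(x,C)$ is comeager in $G$ for every $x\in X$. Then for all $x,y\in C$: $$(x,y)\in E^X_G\iff\{(a,b)\in G\times G:(a\cdot x,b\cdot y)\in F\}\text{ is non-meager in }G\times G.$$
   Context: $E^X_G=\{(x,y):\exists g\in G\ g\cdot x=y\}$; $[x]_F$ is the $F$-class of $x$; $G(x,A)=\{g\in G:g\cdot x\in A\}$. *)

From Stdlib Require Import Reals.
Open Scope R_scope.
Set Implicit Arguments.

Definition is_topology {X : Type} (opn : (X -> Prop) -> Prop) : Prop :=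
  opn (fun _ => True) /\
  (forall (I : Type) (U : I -> X -> Prop), (forall i, opn (U i)) ->
      opn (fun x => exists i, U i x)) /\
  (forall U V, opn U -> opn V -> opn (fun x => U x /\ V x)).

Definition prod_top {A B : Type} (oA : (A -> Prop) -> Prop) (oB : (B -> Prop) -> Prop)
  (W : A * B -> Prop) : Prop :=
  forall p, W p -> exists U V, oA U /\ oB V /\ U (fst p) /\ V (snd p) /\
     (forall a b, U a -> V b -> W (a, b)).

Definition continuous {A B : Type} (oA : (A -> Prop) -> Prop) (oB : (B -> Prop) -> Prop)
  (f : A -> B) : Prop :=
  forall V, oB V -> oA (fun x => V (f x)).

Definition is_metric {X : Type} (d : X -> X -> R) : Prop :=
  (forall x y, 0 <= d x y) /\ (forall x y, d x y = 0 <-> x = y) /\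
  (forall x y, d x y = d y x) /\ (forall x y z, d x z <= d x y + d y z).

Definition metric_open {X : Type} (d : X -> X -> R) (U : X -> Prop) : Prop :=
  forall x, U x -> exists eps, 0 < eps /\ forall y, d x y < eps -> U y.

Definition cauchy {X : Type} (d : X -> X -> R) (s : nat -> X) : Prop :=
  forall eps, 0 < eps -> exists N, forall m n, (N <= m)%nat -> (N <= n)%nat -> d (s m) (s n) < eps.

Definition converges {X : Type} (d : X -> X -> R) (s : nat -> X) (l : X) : Prop :=
  forall eps, 0 < eps -> exists N, forall n, (N <= n)%nat -> d (s n) l < eps.

Definition complete_metric {X : Type} (d : X -> X -> R) : Prop :=
  forall s, cauchy d s -> exists l, converges d s l.

Definition countable_set {X : Type} (D : X -> Prop) : Prop :=
  exists f : nat -> X, forall x, D x -> exists n, f n = x.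

Definition dense {X : Type} (opn : (X -> Prop) -> Prop) (D : X -> Prop) : Prop :=
  forall U, opn U -> (exists x, U x) -> exists x, U x /\ D x.

Definition separable {X : Type} (opn : (X -> Prop) -> Prop) : Prop :=
  exists D, countable_set D /\ dense opn D.

Definition is_polish {X : Type} (opn : (X -> Prop) -> Prop) : Prop :=
  separable opn /\
  exists d : X -> X -> R, is_metric d /\ complete_metric d /\
     (forall U, opn U <-> metric_open d U).

Definition is_group {G : Type} (mul : G -> G -> G) (inv : G -> G) (e : G) : Prop :=
  (forall a b c, mul a (mul b c) = mul (mul a b) c) /\
  (forall a, mul e a = a /\ mul a e = a) /\
  (forall a, mul (inv a) a = e /\ mul a (inv a) = e).

Definition polish_group {G : Type} (opn : (G -> Prop) -> Prop)
  (mul : G -> G -> G) (inv : G -> G) (e : G) : Prop :=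
  is_group mul inv e /\ is_polish opn /\
  continuous (prod_top opn opn) opn (fun p => mul (fst p) (snd p)) /\
  continuous opn opn inv.

Definition continuous_action {G X : Type} (oG : (G -> Prop) -> Prop) (oX : (X -> Prop) -> Prop)
  (mul : G -> G -> G) (e : G) (act : G -> X -> X) : Prop :=
  (forall x, act e x = x) /\
  (forall g h x, act (mul g h) x = act g (act h x)) /\
  continuous (prod_top oG oX) oX (fun p => act (fst p) (snd p)).

Definition orbit_rel {G X : Type} (act : G -> X -> X) (x y : X) : Prop :=
  exists g, act g x = y.

Definition sigma_algebra {X : Type} (M : (X -> Prop) -> Prop) : Prop :=
  M (fun _ => False) /\
  (forall S, M S -> M (fun x => ~ S x)) /\
  (forall S : nat -> X -> Prop, (forall n, M (S n)) -> M (fun x => exists n, S n x)).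

Definition borel {X : Type} (opn : (X -> Prop) -> Prop) (S : X -> Prop) : Prop :=
  forall M, sigma_algebra M -> (forall U, opn U -> M U) -> M S.

Definition equiv_rel {X : Type} (F : X -> X -> Prop) : Prop :=
  (forall x, F x x) /\ (forall x y, F x y -> F y x) /\
  (forall x y z, F x y -> F y z -> F x z).

Definition closure {X : Type} (opn : (X -> Prop) -> Prop) (S : X -> Prop) (x : X) : Prop :=
  forall U, opn U -> U x -> exists y, U y /\ S y.

Definition nowhere_dense {X : Type} (opn : (X -> Prop) -> Prop) (S : X -> Prop) : Prop :=
  forall U, opn U -> (forall x, U x -> closure opn S x) -> forall x, ~ U x.

Definition meager {X : Type} (opn : (X -> Prop) -> Prop) (S : X -> Prop) : Prop :=
  exists N : nat -> X -> Prop, (forall n, nowhere_dense opn (N n)) /\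
    (forall x, S x -> exists n, N n x).

Definition comeager {X : Type} (opn : (X -> Prop) -> Prop) (S : X -> Prop) : Prop :=
  meager opn (fun x => ~ S x).

From Stdlib Require Import Reals Lra Lia Classical ClassicalEpsilon.
Open Scope R_scope.

(* If g.x = y but the F-relating pairs (a, b) formed a meager set, the Baire
   category theorem in the complete metric space G x G would give a pair
   (a, b) near (1, g^-1), outside that set, with a.x and b.y both in C (the
   sets G(x, C) and G(y, C) being comeager).  As b.y = (b g).x with b g near 1,
   the local condition on C makes both a.x and b.y F-equivalent to x, a
   contradiction.  Conversely, F is contained in the orbit relation, so for
   x, y in different orbits the set of pairs is empty. *)

Section Metric.
Variables (X : Type) (d : X -> X -> R).
Hypothesis hd : is_metric d.

Lemma dist_ge0 a b : 0 <= d a b.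
Proof. apply hd. Qed.

Lemma dist_refl a : d a a = 0.
Proof. apply hd; reflexivity. Qed.

Lemma dist_sym a b : d a b = d b a.
Proof. apply hd. Qed.

Lemma dist_triangle a b c : d a c <= d a b + d b c.
Proof. apply hd. Qed.

Lemma ball_metric_open a r : metric_open d (fun z => d a z < r).
Proof.
  intros z Hz. exists (r - d a z). split; [lra|].
  intros y Hy. pose proof (dist_triangle a z y). lra.
Qed.

End Metric.

Lemma halving_vanishes (r : nat -> R) :
  (forall n, r (S n) <= r n / 2) -> forall eps, 0 < eps -> exists N, r N < eps.
Proof.
  intros Hhalf eps Heps.
  assert (Hr : forall n, r n <= Rabs (r 0%nat) * (/ 2) ^ n).
  { induction n as [|n IH]; simpl.
    - pose proof (Rle_abs (r 0%nat)). lra.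
    - specialize (Hhalf n). lra. }
  destruct (Req_dec (Rabs (r 0%nat)) 0) as [H0|H0].
  - exists 0%nat. specialize (Hr 0%nat). rewrite H0 in Hr. simpl in Hr. lra.
  - assert (Hpos : 0 < Rabs (r 0%nat)) by (pose proof (Rabs_pos (r 0%nat)); lra).
    destruct (pow_lt_1_zero (/ 2) ltac:(rewrite Rabs_pos_eq; lra)
                (eps / Rabs (r 0%nat)) ltac:(apply Rdiv_lt_0_compat; lra)) as [N HN].
    exists N. specialize (HN N (le_n N)). rewrite Rabs_pos_eq in HN by (apply pow_le; lra).
    apply (Rmult_lt_compat_l (Rabs (r 0%nat))) in HN; [|lra].
    replace (Rabs (r 0%nat) * (eps / Rabs (r 0%nat))) with eps in HN by (field; lra).
    specialize (Hr N). lra.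
Qed.

Section Baire.
Variables (X : Type) (opn : (X -> Prop) -> Prop) (d : X -> X -> R).
Hypothesis hd : is_metric d.
Hypothesis hcomplete : complete_metric d.
Hypothesis hopn : forall U, opn U <-> metric_open d U.

(* The limit is only in the closed balls, hence the doubled radius in the
   nesting hypothesis. *)
Lemma nested_balls_limit (c : nat -> X) (r : nat -> R) :
  (forall n, 0 < r n) -> (forall n, r (S n) <= r n / 2) ->
  (forall n z, d (c (S n)) z < 2 * r (S n) -> d (c n) z < r n) ->
  exists l, forall n, d (c n) l <= r n.
Proof.
  intros Hpos Hhalf Hnest.
  assert (Hdeep : forall k j z, d (c (j + k)%nat) z < r (j + k)%nat -> d (c k) z < r k).
  { intros k j; induction j as [|j IH]; intros z Hz; [exact Hz|].
    apply IH, Hnest. simpl in Hz. pose proof (Hpos (S (j + k))). lra. }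
  assert (Hin : forall k m, (k <= m)%nat -> d (c k) (c m) < r k).
  { intros k m Hkm. replace m with (m - k + k)%nat by lia. apply (Hdeep k (m - k)%nat).
    rewrite dist_refl by exact hd. apply Hpos. }
  assert (Hcauchy : cauchy d c).
  { intros eps Heps. destruct (halving_vanishes r Hhalf (eps / 2)) as [N HN]; [lra|].
    exists N. intros m n Hm Hn. pose proof (Hin N m Hm). pose proof (Hin N n Hn).
    pose proof (dist_triangle _ d hd (c m) (c N) (c n)).
    rewrite (dist_sym _ d hd (c m) (c N)) in *. lra. }
  destruct (hcomplete c Hcauchy) as [l Hl]. exists l. intro k.
  apply Rnot_lt_le. intro Hlt. destruct (Hl (d (c k) l - r k)) as [M HM]; [lra|].
  specialize (HM (M + k)%nat ltac:(lia)). pose proof (Hin k (M + k)%nat ltac:(lia)).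
  pose proof (dist_triangle _ d hd (c k) (c (M + k)%nat) l). lra.
Qed.

Lemma nowhere_dense_avoid_ball (N : X -> Prop) a r :
  nowhere_dense opn N -> 0 < r ->
  exists a' r', 0 < r' /\ r' <= r / 2 /\
    forall z, d a' z < 2 * r' -> d a z < r /\ ~ N z.
Proof.
  intros hN hr.
  assert (Hp : exists p, d a p < r /\ ~ closure opn N p).
  { apply NNPP. intro Hno.
    apply (hN (fun z => d a z < r)) with (x := a).
    - apply hopn, ball_metric_open, hd.
    - intros z Hz. apply NNPP. intro Hc. apply Hno. eauto.
    - rewrite dist_refl by exact hd. exact hr. }
  destruct Hp as [p [Hap Hcl]].
  apply not_all_ex_not in Hcl. destruct Hcl as [U HU].
  apply imply_to_and in HU. destruct HU as [oU HU].
  apply imply_to_and in HU. destruct HU as [Up HUN].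
  destruct (proj1 (hopn U) oU p Up) as [eps [Heps HUball]].
  set (r' := Rmin eps (r - d a p) / 2).
  pose proof (Rmin_l eps (r - d a p)). pose proof (Rmin_r eps (r - d a p)).
  assert (0 < Rmin eps (r - d a p)) by (apply Rmin_pos; lra).
  exists p, r'. unfold r'. split; [lra|]. split.
  { pose proof (dist_ge0 _ d hd a p). lra. }
  intros z Hz. split.
  - pose proof (dist_triangle _ d hd a p z). lra.
  - intro Nz. apply HUN. exists z. split; [apply HUball; lra | exact Nz].
Qed.

Theorem baire_category (U M : X -> Prop) x0 :
  opn U -> U x0 -> meager opn M -> exists x, U x /\ ~ M x.
Proof.
  intros oU Ux0 [N [hN hcov]].
  destruct (proj1 (hopn U) oU x0 Ux0) as [r0 [Hr0 Hball]].
  (* The guard [0 < snd p] makes the relation total, so that [choice] applies. *)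
  set (shrinks := fun (n : nat) (p q : X * R) =>
         0 < snd p -> 0 < snd q /\ snd q <= snd p / 2 /\
         forall z, d (fst q) z < 2 * snd q -> d (fst p) z < snd p /\ ~ N n z).
  destruct (choice (fun np q => shrinks (fst np) (snd np) q)) as [next Hnext].
  { intros [n [a r]]. destruct (Rlt_dec 0 r) as [hr|hr].
    - destruct (nowhere_dense_avoid_ball (N n) a r (hN n) hr) as [a' [r' H]].
      exists (a', r'). intros _. exact H.
    - exists (a, r). intro. contradiction. }
  set (s := fix s n := match n with O => (x0, r0) | S k => next (k, s k) end).
  assert (Hpos : forall n, 0 < snd (s n)).
  { induction n as [|n IH]; [exact Hr0|]. apply (Hnext (n, s n) IH). }
  assert (Hstep := fun n => proj2 (Hnext (n, s n) (Hpos n))). simpl in Hstep.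
  destruct (nested_balls_limit (fun n => fst (s n)) (fun n => snd (s n)) Hpos)
    as [l Hl].
  - intro n. apply (Hstep n).
  - intros n z Hz. apply (Hstep n), Hz.
  - assert (Hl' : forall n, d (fst (s (S n))) l < 2 * snd (s (S n))).
    { intro n. pose proof (Hl (S n)). pose proof (Hpos (S n)). lra. }
    exists l. split.
    + apply Hball. apply (Hstep 0%nat), Hl'.
    + intro Ml. destruct (hcov l Ml) as [n Nl]. apply (proj2 (Hstep n) l (Hl' n)), Nl.
Qed.

End Baire.

Section MaxMetric.
Variables (A B : Type) (oA : (A -> Prop) -> Prop) (oB : (B -> Prop) -> Prop).
Variables (dA : A -> A -> R) (dB : B -> B -> R).
Hypotheses (hdA : is_metric dA) (hdB : is_metric dB).
Hypotheses (hoA : forall U, oA U <-> metric_open dA U) (hoB : forall U, oB U <-> metric_open dB U).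

Definition max_dist (p q : A * B) : R := Rmax (dA (fst p) (fst q)) (dB (snd p) (snd q)).

Lemma max_dist_lt p q eps :
  max_dist p q < eps <-> dA (fst p) (fst q) < eps /\ dB (snd p) (snd q) < eps.
Proof.
  unfold max_dist. split.
  - intro H. pose proof (Rmax_l (dA (fst p) (fst q)) (dB (snd p) (snd q))).
    pose proof (Rmax_r (dA (fst p) (fst q)) (dB (snd p) (snd q))). lra.
  - intros [H1 H2]. apply Rmax_lub_lt; assumption.
Qed.

Lemma max_dist_metric : is_metric max_dist.
Proof.
  unfold max_dist. split; [|split; [|split]].
  - intros p q. apply (Rle_trans _ _ _ (dist_ge0 _ dA hdA _ _) (Rmax_l _ _)).
  - intros [a b] [a' b']; simpl. split.
    + intro H0. pose proof (Rmax_l (dA a a') (dB b b')). pose proof (Rmax_r (dA a a') (dB b b')).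
      pose proof (dist_ge0 _ dA hdA a a'). pose proof (dist_ge0 _ dB hdB b b').
      assert (a = a') by (apply hdA; lra). assert (b = b') by (apply hdB; lra). congruence.
    + intro Heq. injection Heq as -> ->. rewrite !dist_refl by assumption.
      apply Rmax_left; lra.
  - intros p q. rewrite (dist_sym _ dA hdA), (dist_sym _ dB hdB). reflexivity.
  - intros p q r. apply Rmax_lub.
    + pose proof (dist_triangle _ dA hdA (fst p) (fst q) (fst r)).
      pose proof (Rmax_l (dA (fst p) (fst q)) (dB (snd p) (snd q))).
      pose proof (Rmax_l (dA (fst q) (fst r)) (dB (snd q) (snd r))). lra.
    + pose proof (dist_triangle _ dB hdB (snd p) (snd q) (snd r)).
      pose proof (Rmax_r (dA (fst p) (fst q)) (dB (snd p) (snd q))).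
      pose proof (Rmax_r (dA (fst q) (fst r)) (dB (snd q) (snd r))). lra.
Qed.

Lemma max_dist_complete :
  complete_metric dA -> complete_metric dB -> complete_metric max_dist.
Proof.
  intros hcA hcB s Hs.
  destruct (hcA (fun n => fst (s n))) as [l1 Hl1].
  { intros eps Heps. destruct (Hs eps Heps) as [N HN].
    exists N. intros m n Hm Hn. apply (max_dist_lt (s m) (s n)), HN; assumption. }
  destruct (hcB (fun n => snd (s n))) as [l2 Hl2].
  { intros eps Heps. destruct (Hs eps Heps) as [N HN].
    exists N. intros m n Hm Hn. apply (max_dist_lt (s m) (s n)), HN; assumption. }
  exists (l1, l2). intros eps Heps.
  destruct (Hl1 eps Heps) as [N1 HN1]. destruct (Hl2 eps Heps) as [N2 HN2].
  exists (N1 + N2)%nat. intros n Hn. apply max_dist_lt. split.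
  - apply HN1. lia.
  - apply HN2. lia.
Qed.

Lemma prod_top_metric_open W : prod_top oA oB W <-> metric_open max_dist W.
Proof.
  split.
  - intros HW p Wp. destruct (HW p Wp) as [U [V [oU [oV [Up [Vp HUV]]]]]].
    destruct (proj1 (hoA U) oU _ Up) as [e1 [He1 H1]].
    destruct (proj1 (hoB V) oV _ Vp) as [e2 [He2 H2]].
    exists (Rmin e1 e2). split; [apply Rmin_pos; assumption|].
    intros [a b] Hq. apply max_dist_lt in Hq. destruct Hq as [Ha Hb].
    pose proof (Rmin_l e1 e2). pose proof (Rmin_r e1 e2).
    apply HUV; [apply H1 | apply H2]; simpl in *; lra.
  - intros HW p Wp. destruct (HW p Wp) as [eps [Heps Hball]].
    exists (fun a => dA (fst p) a < eps), (fun b => dB (snd p) b < eps).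
    split; [apply hoA, ball_metric_open, hdA|].
    split; [apply hoB, ball_metric_open, hdB|].
    rewrite !dist_refl by assumption.
    split; [exact Heps|]. split; [exact Heps|].
    intros a b Ha Hb. apply Hball, max_dist_lt. split; assumption.
Qed.

Theorem baire_category_prod (W M : A * B -> Prop) p0 :
  complete_metric dA -> complete_metric dB ->
  prod_top oA oB W -> W p0 -> meager (prod_top oA oB) M -> exists p, W p /\ ~ M p.
Proof.
  intros hcA hcB.
  apply (baire_category _ (prod_top oA oB) max_dist max_dist_metric
           (max_dist_complete hcA hcB) prod_top_metric_open).
Qed.

End MaxMetric.

Section Meager.
Variables (A B : Type) (oA : (A -> Prop) -> Prop) (oB : (B -> Prop) -> Prop).

Lemma prod_top_rect (U : A -> Prop) (V : B -> Prop) :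
  oA U -> oB V -> prod_top oA oB (fun p => U (fst p) /\ V (snd p)).
Proof. intros oU oV p [Up Vp]. exists U, V. repeat split; auto. Qed.

Lemma nowhere_dense_of_empty (S : A -> Prop) : (forall x, ~ S x) -> nowhere_dense oA S.
Proof.
  intros HS U oU Hcl x Ux. destruct (Hcl x Ux U oU Ux) as [y [_ Sy]]. exact (HS y Sy).
Qed.

Lemma meager_of_empty (S : A -> Prop) : (forall x, ~ S x) -> meager oA S.
Proof.
  intro HS. exists (fun _ => S). split.
  - intros _. apply nowhere_dense_of_empty, HS.
  - intros x Sx. exfalso. exact (HS x Sx).
Qed.

Lemma meager_union (P Q : A -> Prop) :
  meager oA P -> meager oA Q -> meager oA (fun x => P x \/ Q x).
Proof.
  intros [M [hM cM]] [N [hN cN]].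
  exists (fun n => if Nat.even n then M (Nat.div2 n) else N (Nat.div2 n)). split.
  - intro n. destruct (Nat.even n); [apply hM | apply hN].
  - intros x [Px|Qx].
    + destruct (cM x Px) as [k Mk]. exists (2 * k)%nat.
      rewrite Nat.even_even, Nat.div2_double. exact Mk.
    + destruct (cN x Qx) as [k Nk]. exists (S (2 * k))%nat.
      rewrite Nat.even_succ, <- Nat.negb_even, Nat.even_even, Nat.div2_succ_double. exact Nk.
Qed.

Lemma nowhere_dense_fst (P : A -> Prop) : oB (fun _ => True) ->
  nowhere_dense oA P -> nowhere_dense (prod_top oA oB) (fun p => P (fst p)).
Proof.
  intros oBT hP W oW Hcl p Wp.
  destruct (oW p Wp) as [U [V [oU [oV [Up [Vp HUV]]]]]].
  apply (hP U oU) with (x := fst p); [|exact Up].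
  intros a Ua U' oU' U'a.
  destruct (Hcl (a, snd p) (HUV a (snd p) Ua Vp) (fun q => U' (fst q))) as [q [U'q Pq]].
  - intros q U'q. exists U', (fun _ => True). repeat split; auto.
  - exact U'a.
  - exists (fst q). split; assumption.
Qed.

Lemma nowhere_dense_snd (P : B -> Prop) : oA (fun _ => True) ->
  nowhere_dense oB P -> nowhere_dense (prod_top oA oB) (fun p => P (snd p)).
Proof.
  intros oAT hP W oW Hcl p Wp.
  destruct (oW p Wp) as [U [V [oU [oV [Up [Vp HUV]]]]]].
  apply (hP V oV) with (x := snd p); [|exact Vp].
  intros b Vb V' oV' V'b.
  destruct (Hcl (fst p, b) (HUV (fst p) b Up Vb) (fun q => V' (snd q))) as [q [V'q Pq]].
  - intros q V'q. exists (fun _ => True), V'. repeat split; auto.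
  - exact V'b.
  - exists (snd q). split; assumption.
Qed.

Lemma meager_fst (P : A -> Prop) : oB (fun _ => True) ->
  meager oA P -> meager (prod_top oA oB) (fun p => P (fst p)).
Proof.
  intros oBT [N [hN cN]]. exists (fun n p => N n (fst p)).
  split; [intro n; apply nowhere_dense_fst, hN; exact oBT | intros p; apply cN].
Qed.

Lemma meager_snd (P : B -> Prop) : oA (fun _ => True) ->
  meager oB P -> meager (prod_top oA oB) (fun p => P (snd p)).
Proof.
  intros oAT [N [hN cN]]. exists (fun n p => N n (snd p)).
  split; [intro n; apply nowhere_dense_snd, hN; exact oAT | intros p; apply cN].
Qed.

End Meager.

Lemma open_section_fst {A B C : Type} (oA : (A -> Prop) -> Prop) (oB : (B -> Prop) -> Prop)
  (oC : (C -> Prop) -> Prop) (dA : A -> A -> R) (f : A * B -> C) (b : B) (V : C -> Prop) :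
  (forall U, oA U <-> metric_open dA U) ->
  continuous (prod_top oA oB) oC f -> oC V -> oA (fun a => V (f (a, b))).
Proof.
  intros hoA hf oV. apply hoA. intros a Va.
  destruct (hf V oV (a, b) Va) as [U [W [oU [_ [Ua [Wb HU]]]]]].
  destruct (proj1 (hoA U) oU a Ua) as [eps [Heps Hball]].
  exists eps. split; [exact Heps|]. intros a' Ha'. apply (HU a' b); auto.
Qed.

Theorem mainTheorem10
  (G : Type) (oG : (G -> Prop) -> Prop) (mul : G -> G -> G) (inv : G -> G) (e : G)
  (hG : polish_group oG mul inv e)
  (X : Type) (oX : (X -> Prop) -> Prop) (hX : is_polish oX)
  (act : G -> X -> X) (hact : continuous_action oG oX mul e act)
  (F : X -> X -> Prop)
  (hFborel : borel (prod_top oX oX) (fun p => F (fst p) (snd p)))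
  (hFeq : equiv_rel F)
  (hFE : forall x y, F x y -> orbit_rel act x y)
  (C : X -> Prop)
  (hCloc : forall x, C x -> exists V : G -> Prop, oG V /\ V e /\
             (forall g, V g -> C (act g x) -> F x (act g x)))
  (hCcom : forall x, comeager oG (fun g => C (act g x))) :
  forall x y, C x -> C y ->
    (orbit_rel act x y <->
     ~ meager (prod_top oG oG) (fun p => F (act (fst p) x) (act (snd p) y))).
Proof.
  intros x y Cx Cy.
  destruct hG as [[_ [_ hinv]] [[_ [d [hd [hcomplete hopen]]]] [hmul _]]].
  destruct hact as [act_e [act_mul _]].
  destruct hFeq as [_ [F_sym F_trans]].
  assert (oT : oG (fun _ => True)) by (apply hopen; intros g _; exists 1; split; [lra | auto]).
  split.
  - intros [g Hg] Hmeager.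
    destruct (hCloc x Cx) as [V [oV [Ve HV]]].
    destruct (baire_category_prod G G oG oG d d hd hd hopen hopen
                (fun p => V (fst p) /\ V (mul (snd p) g))
                (fun p => (F (act (fst p) x) (act (snd p) y) \/ ~ C (act (fst p) x))
                          \/ ~ C (act (snd p) y))
                (e, inv g) hcomplete hcomplete)
      as [[a b] [[Va Vbg] Hgood]].
    + apply (prod_top_rect G G oG oG V (fun b => V (mul b g)) oV).
      exact (open_section_fst oG oG oG d (fun p => mul (fst p) (snd p)) g V hopen hmul oV).
    + simpl. rewrite (proj1 (hinv g)). split; exact Ve.
    + repeat apply meager_union;
        [exact Hmeager | exact (meager_fst G G oG oG _ oT (hCcom x))
        | exact (meager_snd G G oG oG _ oT (hCcom y))].
    + apply Hgood. simpl.
      destruct (classic (C (act a x))) as [Ca|]; [|auto].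
      destruct (classic (C (act b y))) as [Cb|]; [|auto].
      rewrite <- Hg, <- act_mul in Cb |- *.
      left; left. apply F_trans with x; [apply F_sym|]; apply HV; assumption.
  - intros Hnm. apply NNPP. intro Hno. apply Hnm, meager_of_empty.
    intros [a b] Hab. apply Hno. simpl in Hab. destruct (hFE _ _ Hab) as [h Hh].
    exists (mul (inv b) (mul h a)).
    rewrite !act_mul, Hh, <- act_mul, (proj1 (hinv b)), act_e. reflexivity.
Qed.
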